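(* Let $n \geq 2$, $b \geq 2$ and $B$ be positive integers, let $L := \lceil \log_2 n \rceil$ and $T := bB$, and assume $$B \geq \frac{n}{b} L \qquad\text{and}\qquad B \geq 4L .$$ Define $s_0 := n$ and $s_{r+1} := \lceil s_r/2 \rceil$ for $r \geq 0$, and for each $r \geq 0$ let $J_r := \left\lfloor \frac{T}{s_r L} \right\rfloor$. Then for every integer $r$ with $0 \leq r < L - 1$ and every integer $z$ with $0 \leq z < b$, $$s_{r+1} - \left\lceil \frac{b - z}{J_{r+1}} \right\rceil \;\geq\; \left\lceil \frac{z}{J_r} \right\rceil .$$
   Context: $\lceil\cdot\rceil$ and $\lfloor\cdot\rfloor$ denote the ceiling and floor functions. In the paper, $s_r$ is the number of surviving candidate arms in round $r$ of Sequential Halving with $n$ arms and total budget $T$, and $J_r$ is the number of pulls of each surviving arm in round $r$; the inequality expresses that when a batch of size $b$ spans rounds $r$ and $r+1$ (with $z$ pulls in round $r$), no incorrect promotion occurs. The hypotheses guarantee $J_r \ge 1$ for all relevant $r$. *)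

From mathcomp Require Import all_boot.

Definition ceildiv (a d : nat) : nat := (a + d.-1) %/ d.

(* L = ceil(log2 n): the smallest e with n <= 2^e (up_log from prime.v). *)
Definition clog2 (n : nat) : nat := up_log 2 n.

Fixpoint surv (n r : nat) : nat :=
  match r with
  | 0 => n
  | r'.+1 => ceildiv (surv n r') 2
  end.

Definition pulls (n T r : nat) : nat := T %/ (surv n r * clog2 n).

From mathcomp Require Import all_boot.
From mathcomp Require Import zify.

Set Implicit Arguments.
Unset Strict Implicit.

(* Write s = s_r, s' = s_(r+1) and J = J_r <= J' = J_(r+1).  From n <= s 2^r and
   2^(L-1) < n we get s > 2^(L-1-r) >= 2, and T >= n L >= s L gives J >= 1.
   Maximality of the floor J gives (J + 1) s L > T >= 4 b L; together with
   s <= 2 s' this yields b <= (s' - 1) J, which is exactly the room needed to fit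
   z pulls at rate J and b - z pulls at rate J' into s' arms. *)

Lemma leq_ceildivLR a d k : 0 < d -> (ceildiv a d <= k) = (a <= k * d).
Proof. by move=> d_gt0; rewrite /ceildiv -ltnS ltn_divLR // mulSn; lia. Qed.

Lemma leq_ceildivM a d : ceildiv a d * d <= a + d.-1.
Proof. exact: leq_divM. Qed.

Lemma ceildiv_split_le b z s J J' :
  0 < s -> 0 < J -> J <= J' -> b <= s.-1 * J -> z <= b ->
  ceildiv z J + ceildiv (b - z) J' <= s.
Proof.
move=> s_gt0 J_gt0 leJJ' b_le z_le_b.
have := leq_ceildivM z J; move: (ceildiv z J) => c cJ_le.
have sJ : s.-1 * J + J = s * J by rewrite -mulSnr prednK.
have c_lt_s : c < s by rewrite -(ltn_pmul2r J_gt0); lia.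
have J'_gt0 : 0 < J' := leq_trans J_gt0 leJJ'.
rewrite -(leq_subRL _ (ltnW c_lt_s)) leq_ceildivLR //.
by apply: leq_trans (leq_mul (leqnn _) leJJ'); rewrite mulnBl; lia.
Qed.

(* 2 (s' - 1) J >= (J + 1) s' - 2 because (s' - 2) (J - 1) >= 0. *)
Lemma leq_pred_mul b J s s' :
  0 < J -> 1 < s' -> s <= 2 * s' -> 4 * b < J.+1 * s -> b <= s'.-1 * J.
Proof. nia. Qed.

Lemma surv_succ_le n r : surv n r.+1 <= surv n r.
Proof. rewrite /= /ceildiv; lia. Qed.

Lemma surv_le_double n r : surv n r <= 2 * surv n r.+1.
Proof. rewrite /= /ceildiv; lia. Qed.

Lemma surv_le n r : surv n r <= n.
Proof. by elim: r => // r IH; exact: leq_trans (surv_succ_le n r) IH. Qed.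

Lemma leq_surv_expn n r : n <= surv n r * 2 ^ r.
Proof.
elim: r => [|r IH]; first by rewrite muln1.
by apply: leq_trans IH _; rewrite expnS mulnCA mulnA leq_mul2r surv_le_double orbT.
Qed.

Lemma expn_lt_surv n r :
  1 < n -> r < clog2 n -> 2 ^ (clog2 n - r).-1 < surv n r.
Proof.
move=> n_gt1 r_lt; rewrite -(ltn_pmul2r (expn_gt0 2 r)) -expnD.
apply: leq_ltn_trans _ (leq_trans (up_log_gtn (isT : 1 < 2) n_gt1) (leq_surv_expn n r)).
by rewrite leq_exp2l //; rewrite /clog2 in r_lt *; lia.
Qed.

Lemma surv_gt0 n r : 0 < n -> 0 < surv n r.
Proof.
move=> n_gt0; have := leq_trans n_gt0 (leq_surv_expn n r).
by rewrite muln_gt0 => /andP[].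
Qed.

Lemma clog2_gt0 n : 1 < n -> 0 < clog2 n.
Proof. by move=> n_gt1; rewrite /clog2 up_log_gt0 n_gt1. Qed.

Lemma surv_clog2_gt0 n r : 1 < n -> 0 < surv n r * clog2 n.
Proof. by move=> n_gt1; rewrite muln_gt0 surv_gt0 ?clog2_gt0 // ltnW. Qed.

Lemma pulls_gt0 n T r : 1 < n -> n * clog2 n <= T -> 0 < pulls n T r.
Proof.
move=> n_gt1 nL_le; rewrite divn_gt0 ?surv_clog2_gt0 //.
by apply: leq_trans nL_le; rewrite leq_mul2r surv_le orbT.
Qed.

Lemma pulls_succ_ge n T r : 1 < n -> pulls n T r <= pulls n T r.+1.
Proof.
by move=> n_gt1; rewrite leq_div2l ?surv_clog2_gt0 // leq_mul2r surv_succ_le orbT.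
Qed.

Lemma ltn_pulls n T r : 1 < n -> T < (pulls n T r).+1 * surv n r * clog2 n.
Proof. by move=> n_gt1; rewrite -mulnA ltn_ceil ?surv_clog2_gt0. Qed.

Theorem mainTheorem2 (n b B : nat) :
  2 <= n -> 2 <= b -> 0 < B ->
  n * clog2 n <= b * B ->
  4 * clog2 n <= B ->
  forall r z : nat, r < clog2 n - 1 -> z < b ->
    ceildiv z (pulls n (b * B) r) + ceildiv (b - z) (pulls n (b * B) r.+1)
      <= surv n r.+1.
Proof.
move=> n_gt1 _ _ nL_le fourL_le r z r_lt z_lt.
have L_gt0 := clog2_gt0 n_gt1.
have s_gt2 : 2 < surv n r.
  apply: leq_ltn_trans (expn_lt_surv n_gt1 _); last by lia.
  by rewrite (leq_exp2l 1) //; lia.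
have s'_gt1 : 1 < surv n r.+1 by have := surv_le_double n r; lia.
have J_gt0 := pulls_gt0 r n_gt1 nL_le.
apply: ceildiv_split_le (ltnW z_lt); [exact: ltnW | exact: pulls_gt0 | exact: pulls_succ_ge |].
apply: leq_pred_mul J_gt0 s'_gt1 (surv_le_double n r) _.
rewrite -(ltn_pmul2r L_gt0); apply: leq_ltn_trans (ltn_pulls (b * B) r n_gt1).
by rewrite mulnAC mulnC leq_mul2l fourL_le orbT.
Qed.
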